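(* In the standard variable-processor cup game on $n$ cups starting from all fills $0$, against a greedy emptier, the filler has a strategy that achieves a backlog of at least $\frac{n-1}{2}$ within at most $n^3$ rounds.
   Context: The (standard) variable-processor cup game on $n$ cups: real fills $x_1,\dots,x_n$; in each round the filler chooses an integer $1\le p\le n$ and reals $a_i\in[0,1]$ with $\sum_i a_i=p$ and adds $a_i$ to cup $i$; then the emptier chooses $p$ distinct cups and replaces each of their fills $x$ by $\max(0,x-1)$. The backlog is $\max_i x_i$. The greedy emptier empties from the $p$ fullest cups after the filler's move. *)

From HB Require Import structures.
From mathcomp Require Import all_boot all_order all_algebra.
From mathcomp Require Import reals.
Set Implicit Arguments. Unset Strict Implicit. Unset Printing Implicit Defensive.
Import Order.TTheory GRing.Theory Num.Theory.
Local Open Scope ring_scope.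

Definition cups (R : realType) (n : nat) := 'I_n -> R.

Definition cups0 (R : realType) (n : nat) : cups R n := fun _ => 0.

(* A filler move: a number of processors p and the amounts a_i added. *)
Definition filler_move (R : realType) (n : nat) := (nat * cups R n)%type.

Definition valid_filler_move (R : realType) (n : nat) (m : filler_move R n) : Prop :=
  let: (p, a) := m in
  [/\ (1 <= p <= n)%N, (forall i, 0 <= a i <= 1) & \sum_(i < n) a i = p%:R].

Definition add_fill (R : realType) (n : nat) (x a : cups R n) : cups R n :=
  fun i => x i + a i.

Definition greedy_choice (R : realType) (n : nat) (y : cups R n) (p : nat)
  (S : {set 'I_n}) : Prop :=
  #|S| = p /\ (forall i j, i \in S -> j \notin S -> y j <= y i).

Definition empty_cups (R : realType) (n : nat) (y : cups R n) (S : {set 'I_n})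
  : cups R n :=
  fun i => if i \in S then Num.max 0 (y i - 1) else y i.

(* A (deterministic, adaptive) filler strategy: given the history of
   configurations x_0, ..., x_t (at the start of each round so far),
   it chooses the move of round t+1. *)
Definition filler_strategy (R : realType) (n : nat) :=
  seq (cups R n) -> filler_move R n.

Definition history (R : realType) (n : nat) (play : nat -> cups R n) (t : nat)
  : seq (cups R n) := [seq play k | k <- iota 0 t.+1].

Definition greedy_play (R : realType) (n : nat) (f : filler_strategy R n)
  (T : nat) (play : nat -> cups R n) : Prop :=
  play 0%N = @cups0 R n /\
  forall t, (t < T)%N ->
    let m := f (history play t) in
    exists S : {set 'I_n},
      greedy_choice (add_fill (play t) m.2) m.1 S /\
      play t.+1 = empty_cups (add_fill (play t) m.2) S.

Definition backlog_ge (R : realType) (n : nat) (x : cups R n) (b : R) : Prop :=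
  exists i : 'I_n, b <= x i.

(* Fills stay half-integers m_k / 2.  If two cups i, j share a fill c, the
   filler uses one processor more than there are strictly fuller cups, puts 1
   into each fuller cup and 1/2 into each of i and j; greedy then empties
   exactly the fuller cups and one of i, j, so the only effect is to move i, j
   to c - 1/2 and c + 1/2 (0 and 1/2 if c = 0).  This raises the potential
   sum_k m_k^2.  While the backlog is below (n - 1) / 2, the n values m_k lie
   in [0, n - 2], so some two cups share a fill and the potential is below
   n (n - 1)^2 < n^3. *)

From HB Require Import structures.
From mathcomp Require Import all_boot all_order all_algebra.
From mathcomp Require Import reals.
From mathcomp Require Import zify lra.
Set Implicit Arguments. Unset Strict Implicit. Unset Printing Implicit Defensive.
Import Order.TTheory GRing.Theory Num.Theory.
Local Open Scope ring_scope.

Lemma last_history (R : realType) (n : nat) (play : nat -> cups R n) (t : nat) :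
  last (@cups0 R n) (history play t) = play t.
Proof. by rewrite /history -addn1 iotaD map_cat last_cat. Qed.

Section Potential.
Variable n : nat.

Definition potential (m : 'I_n -> nat) : nat := \sum_(k < n) m k ^ 2.

Definition spread (m : 'I_n -> nat) (e o : 'I_n) : 'I_n -> nat :=
  fun k => if k == e then (m k).-1 else if k == o then (m k).+1 else m k.

Lemma potential_spread (m : 'I_n -> nat) (e o : 'I_n) :
  e != o -> m e = m o -> (potential m < potential (spread m e o))%N.
Proof.
move=> eo meo; rewrite /potential (bigD1 e) // [X in (_ < X)%N](bigD1 e) //=.
rewrite (bigD1 o) 1?eq_sym //= [X in (_ < _ + X)%N](bigD1 o) 1?eq_sym //=.
rewrite [X in (_ < _ + (_ + X))%N](eq_bigr (fun k => m k ^ 2)%N); last first.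
  by move=> k /andP[/negbTE ke /negbTE ko]; rewrite /spread ke ko.
rewrite /spread eqxx eq_sym (negbTE eo) eqxx meo.
by case: (m o) => [|a] /=; nia.
Qed.

Lemma potential_lt_cube (m : 'I_n -> nat) :
  (0 < n)%N -> (forall k, m k < n.-1)%N -> (potential m < n ^ 3)%N.
Proof.
move=> n_gt0 m_lt; apply: (@leq_ltn_trans (\sum_(k < n) n.-1 ^ 2)%N).
  by apply: leq_sum => k _; rewrite leq_exp2r // ltnW.
rewrite sum_nat_const card_ord [(n ^ 3)%N]expnS ltn_pmul2l // ltn_exp2r //.
by rewrite ltn_predL.
Qed.

Lemma bounded_not_injective (m : 'I_n -> nat) :
  (0 < n)%N -> (forall k, m k < n.-1)%N -> ~ injective m.
Proof.
move=> n_gt0 m_lt m_inj.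
have /leq_card : injective (fun k => Ordinal (m_lt k)).
  by move=> k1 k2 /(congr1 val) /m_inj.
by rewrite !card_ord leqNgt ltn_predL n_gt0.
Qed.

End Potential.

Section Balancing.
Variables (R : realType) (n : nat).
Implicit Types (x y : cups R n) (m : 'I_n -> nat).

Definition half_integral x m : Prop := forall k, x k = (m k)%:R / 2.

Definition above x (i : 'I_n) : {set 'I_n} := [set k | x i < x k].

Definition equal_pair x : option ('I_n * 'I_n) :=
  [pick ij : 'I_n * 'I_n | (ij.1 != ij.2) && (x ij.1 == x ij.2)].

Definition balance_move x (i j : 'I_n) : cups R n :=
  fun k => if x i < x k then 1 else if (k == i) || (k == j) then 2^-1 else 0.

(* The fallback move is never played before the backlog is reached. *)
Definition balancing_move x : filler_move R n :=
  if equal_pair x is Some (i, j) then ((#|above x i|).+1, balance_move x i j)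
  else (n, fun _ => 1).

Definition balancing_strategy : filler_strategy R n :=
  fun h => balancing_move (last (@cups0 R n) h).

Lemma half_integral_lt m x (c : nat) :
  half_integral x m -> (forall k, x k < (c%:R - 1) / 2) -> (forall k, m k < c.-1)%N.
Proof.
move=> xm x_lt k; have := x_lt k; rewrite xm => lt_mc.
have : ((m k).+1%:R < c%:R :> R) by rewrite -natr1; lra.
by rewrite ltr_nat; case: c {x_lt lt_mc}.
Qed.

Lemma half_integral_equal_pair m x :
  (0 < n)%N -> half_integral x m -> (forall k, m k < n.-1)%N ->
  exists i j, [/\ equal_pair x = Some (i, j), i != j & x i = x j].
Proof.
move=> n_gt0 xm m_lt; rewrite /equal_pair.
case: pickP => [[i j] /andP[ij /eqP xij]|no_pair].
  by exists i, j.
case: (bounded_not_injective n_gt0 m_lt) => k1 k2 m12; apply/eqP/negPn/negP => k12.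
by have := no_pair (k1, k2); rewrite /= k12 !xm m12 eqxx.
Qed.

Lemma balance_move_valid x i j :
  i != j -> x i = x j -> valid_filler_move ((#|above x i|).+1, balance_move x i j).
Proof.
move=> ij xij; split.
- apply/andP; split=> //; apply: (@leq_ltn_trans #|[set~ i]|).
    apply: subset_leq_card; apply/subsetP => k; rewrite !inE.
    by apply: contraTneq => ->; rewrite ltxx.
  by rewrite cardsC1 card_ord; have := ltn_ord i; lia.
- by move=> k; rewrite /balance_move; case: ifP => _; [|case: ifP => _]; lra.
have iU : i \notin above x i by rewrite inE ltxx.
have jU : j \notin above x i by rewrite inE xij ltxx.
rewrite (bigID (mem (above x i))) /= [X in _ + X](bigD1 i) //=.
rewrite [X in _ + (_ + X)](bigD1 j) /=; last by rewrite jU eq_sym.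
rewrite [X in _ + (_ + (_ + X))]big1; last first.
  move=> k /andP[/andP[kU /negbTE ki] /negbTE kj].
  by move: kU; rewrite /balance_move inE => /negbTE ->; rewrite ki kj.
rewrite (eq_bigr (fun=> 1)); last by move=> k; rewrite /balance_move inE => ->.
by rewrite sumr_const /balance_move -xij ltxx !eqxx orbT /= -[in RHS]natr1; lra.
Qed.

Lemma balancing_move_valid x : (0 < n)%N -> valid_filler_move (balancing_move x).
Proof.
move=> n_gt0; rewrite /balancing_move /equal_pair.
case: pickP => [[i j] /andP[ij /eqP xij]|_]; first exact: balance_move_valid.
split=> [|k|]; rewrite ?n_gt0 ?leqnn //; first lra.
by rewrite sumr_const card_ord.
Qed.

Section Step.
Variables (x : cups R n) (m : 'I_n -> nat) (i j : 'I_n).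
Hypotheses (xm : half_integral x m) (xij : x i = x j).

Let U := above x i.
Let y := add_fill x (balance_move x i j).

Lemma fill_above {k} : k \in U -> y k = x k + 1.
Proof. by rewrite inE /y /add_fill /balance_move => ->. Qed.

Lemma pair_level {k} : k \in [set i; j] -> x k = x i.
Proof. by rewrite !inE => /orP[]/eqP ->. Qed.

Lemma fill_pair {k} : k \in [set i; j] -> y k = x i + 2^-1.
Proof.
move=> kij; have xk := pair_level kij; move: kij.
by rewrite /y /add_fill /balance_move xk ltxx -in_set2 => ->.
Qed.

Lemma fill_rest {k} : k \notin U -> k != i -> k != j -> y k = x k /\ x k <= x i.
Proof.
rewrite inE -leNgt /y /add_fill /balance_move => xk /negbTE ki /negbTE kj.
by rewrite ltNge xk ki kj addr0.
Qed.

Lemma fill_not_above {k} : k \notin U -> y k <= x i + 2^-1.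
Proof.
move=> kU; case: (boolP (k \in [set i; j])) => [/fill_pair -> //|].
rewrite !inE => /norP[ki kj].
by have [-> ?] := fill_rest kU ki kj; lra.
Qed.

(* Cups of U end strictly above x i + 1 and all others at most x i + 1/2, so
   greedy empties all of U and one more cup, necessarily one of i, j. *)
Lemma greedy_balance_choice S :
  greedy_choice y (#|U|).+1 S -> exists2 e, e \in [set i; j] & S = e |: U.
Proof.
move=> [cardS greedyS].
have US : U \subset S.
  apply/subsetP => u uU; apply/negPn/negP => uS.
  suff : S \subset U :\ u by move/subset_leq_card; rewrite cardS (cardsD1 u U) uU; lia.
  apply/subsetP => s sS; rewrite in_setD1; apply/andP; split.
    by apply: contraNneq uS => <-.
  apply/negPn/negP => sU.
  have := greedyS _ _ sS uS; rewrite fill_above //.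
  have := fill_not_above sU; move: uU; rewrite inE; lra.
have /cards1P[e SUe] : #|S :\: U| == 1%N by rewrite cardsD (setIidPr US) cardS subSnn.
have eS : e \in S :\: U by rewrite SUe set11.
move: (eS); rewrite in_setD => /andP[eU eS'].
have S_eU : S = e |: U.
  apply/setP => k; rewrite in_setU1.
  case kU: (k \in U); first by rewrite (subsetP US) ?orbT.
  by rewrite orbF -in_set1 -SUe in_setD kU.
exists e => //; apply/negPn/negP; rewrite !inE => /norP[ei ej].
have iS : i \notin S by rewrite S_eU in_setU1 eq_sym (negbTE ei) inE ltxx.
have := greedyS _ _ eS' iS; rewrite fill_pair ?set21 //.
have [-> ?] := fill_rest eU ei ej; lra.
Qed.

Lemma empty_balance e o :
  e != o -> [set e; o] = [set i; j] ->
  half_integral (empty_cups y (e |: U)) (spread m e o).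
Proof.
move=> eo eo_ij k; rewrite /empty_cups /spread in_setU1.
have [e_ij o_ij] : e \in [set i; j] /\ o \in [set i; j] by rewrite -eo_ij set21 set22.
case: (eqVneq k e) => [->|ke] /=.
  rewrite fill_pair // -(pair_level e_ij) xm; case: (m e) => [|a] /=.
    by rewrite max_l //; lra.
  by rewrite max_r -natr1; have := ler0n R a; lra.
have oU : o \notin U by rewrite inE (pair_level o_ij) ltxx.
case kU: (k \in U).
  have ko : k != o by apply: contraTneq kU => ->; rewrite (negbTE oU).
  by rewrite (negbTE ko) fill_above // addrK max_r // xm divr_ge0 ?ler0n.
case: (eqVneq k o) => [->|ko].
  by rewrite fill_pair // -(pair_level o_ij) xm -natr1; lra.
have : k \notin [set e; o] by rewrite !inE negb_or ke ko.
rewrite eo_ij !inE => /norP[ki kj].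
by have [-> _] := fill_rest (negbT kU) ki kj.
Qed.

End Step.

Lemma balancing_round x m S :
  (0 < n)%N -> half_integral x m -> (forall k, m k < n.-1)%N ->
  greedy_choice (add_fill x (balancing_move x).2) (balancing_move x).1 S ->
  exists m', half_integral (empty_cups (add_fill x (balancing_move x).2) S) m' /\
             (potential m < potential m')%N.
Proof.
move=> n_gt0 xm m_lt.
have [i [j [pair_ij ij xij]]] := half_integral_equal_pair n_gt0 xm m_lt.
rewrite /balancing_move pair_ij /= => /(greedy_balance_choice xij)[e e_ij ->].
pose o := if e == i then j else i.
have eo_ij : [set e; o] = [set i; j].
  by move: e_ij; rewrite /o !inE; case: (eqVneq e i) => [->|_] //= /eqP ->; rewrite setUC.
have o_ij : o \in [set i; j] by rewrite -eo_ij set22.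
have eo : e != o.
  by rewrite /o; case: (eqVneq e i) => [->|ei] //; move: e_ij; rewrite !inE (negbTE ei).
have meo : m e = m o.
  apply/eqP; rewrite -(eqr_nat R); apply/eqP.
  have := xm e; have := xm o; rewrite (pair_level xij e_ij) (pair_level xij o_ij); lra.
exists (spread m e o); split; first exact: empty_balance.
exact: potential_spread.
Qed.

Lemma balancing_play_potential T play :
  (0 < n)%N -> greedy_play balancing_strategy T play ->
  forall t, (t <= T)%N -> (forall s k, (s < t)%N -> play s k < (n%:R - 1) / 2) ->
  exists m, half_integral (play t) m /\ (t <= potential m)%N.
Proof.
move=> n_gt0 [play0 play_step]; elim=> [_ _|t IH tT below].
  by exists (fun=> 0%N); split=> // k; rewrite play0 mul0r.
have [m [xm tm]] := IH (ltnW tT) (fun s k st => below s k (ltnW st)).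
have m_lt := half_integral_lt xm (below t ^~ (ltnSn t)).
have := play_step t tT; rewrite /= /balancing_strategy last_history => -[S [greedyS ->]].
have [m' [xm' mm']] := balancing_round n_gt0 xm m_lt greedyS.
by exists m'; split; last exact: leq_ltn_trans tm mm'.
Qed.

End Balancing.

Theorem theorem5p2 (R : realType) (n : nat) (hn : (0 < n)%N) :
  exists f : filler_strategy R n,
    (forall h, valid_filler_move (f h)) /\
    forall play : nat -> cups R n,
      greedy_play f (n ^ 3) play ->
      exists t, (t <= n ^ 3)%N /\ backlog_ge (play t) ((n%:R - 1) / 2).
Proof.
exists (@balancing_strategy R n); split.
  by move=> h; exact: balancing_move_valid.
move=> play game; set b := (n%:R - 1) / 2.
case: (boolP [exists t : 'I_(n ^ 3).+1, [exists k, b <= play t k]]).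
  by case/existsP=> t /existsP[k bk]; exists t; split; [rewrite -ltnS | exists k].
move/existsPn=> below; exfalso.
have {}below s k : (s <= n ^ 3)%N -> play s k < b.
  by rewrite -ltnS => sT; have /existsPn/(_ k) := below (Ordinal sT); rewrite -ltNge.
have [m [xm Tm]] :=
  balancing_play_potential hn game (leqnn _) (fun s k sT => below s k (ltnW sT)).
have := potential_lt_cube hn (half_integral_lt xm (below _ ^~ (leqnn _))).
by rewrite ltnNge Tm.
Qed.
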